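(* Let $(\alpha_{\mathrm p},\alpha_{\mathrm s},\beta_{\mathrm p},\beta_{\mathrm s})\in\mathcal{A}(K,L,T)$ and write $\alpha=(\alpha_{\mathrm p}\mid\alpha_{\mathrm s})=(\alpha_1,\ldots,\alpha_{K+T})$, $\beta=(\beta_{\mathrm p}\mid\beta_{\mathrm s})=(\beta_1,\ldots,\beta_{L+T})$. Then for all $1\le i\le K+T$ and $1\le j\le L+T$, $|(\alpha_i+\operatorname{Set}(\beta_{\mathrm p}))\cap(\operatorname{Set}(\alpha_{\mathrm p})+\beta_j)|\le1$.
   Context: A degree table with parameters $K,L,T$ is a tuple $(\alpha_{\mathrm p},\alpha_{\mathrm s},\beta_{\mathrm p},\beta_{\mathrm s})$ of nonnegative integer vectors of lengths $K,T,L,T$ such that, with $\alpha,\beta$ the concatenations: entries of $\alpha$ are distinct; entries of $\beta$ are distinct; every $n\in\operatorname{Set}(\alpha_{\mathrm p})+\operatorname{Set}(\beta_{\mathrm p})$ has a unique representation $n=i+j$ with $i\in\operatorname{Set}(\alpha)$, $j\in\operatorname{Set}(\beta)$. $\mathcal{A}(K,L,T)$ is the set of degree tables; $\operatorname{Set}(v)$ is the set of entries of $v$, $x+B=\{x+b:b\in B\}$. *)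

From mathcomp Require Import all_boot.
Set Implicit Arguments. Unset Strict Implicit. Unset Printing Implicit Defensive.

Definition sumset (v w : seq nat) : seq nat := [seq a + b | a <- v, b <- w].

Definition degree_table (K L T : nat) (ap : K.-tuple nat) (as_ : T.-tuple nat)
    (bp : L.-tuple nat) (bs : T.-tuple nat) : Prop :=
  let alpha := ap ++ as_ in
  let beta := bp ++ bs in
  [/\ uniq alpha, uniq beta &
    forall n, n \in sumset ap bp ->
      exists! p : nat * nat, [/\ p.1 \in alpha, p.2 \in beta & n = p.1 + p.2]].

(* If x = u + b1 = a1 + v and y = u + b2 = a2 + v with a's in ap and b's in bp,
   then a1 + b2 and a2 + b1 are the same element of ap + bp, so uniqueness of
   its representation forces a1 = a2 and hence x = y. *)
From mathcomp Require Import all_boot.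
From mathcomp Require Import zify.

Set Implicit Arguments.
Unset Strict Implicit.
Unset Printing Implicit Defensive.

Lemma size_undup_le1 (T : eqType) (s : seq T) :
  {in s &, forall x y, x = y} -> size (undup s) <= 1.
Proof.
move=> const_s; have sub_s : {subset undup s <= s} by move=> x; rewrite mem_undup.
case: (undup s) (undup_uniq s) sub_s => [|x [|y t]] //= /andP[+ _] sub_s.
rewrite inE negb_or => /andP[/eqP x_neq_y _]; exfalso; apply: x_neq_y.
by apply: const_s; apply: sub_s; rewrite !inE eqxx ?orbT.
Qed.

Lemma sumsetP (v w : seq nat) (n : nat) :
  reflect (exists2 a, a \in v & exists2 b, b \in w & n = a + b)
          (n \in sumset v w).
Proof.
apply: (iffP allpairsP) => [[[a b] /= [av bw ->]] | [a av [b bw ->]]].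
  by exists a => //; exists b.
by exists (a, b).
Qed.

Section DegreeTable.

Variables (K L T : nat) (ap : K.-tuple nat) (as_ : T.-tuple nat).
Variables (bp : L.-tuple nat) (bs : T.-tuple nat).
Hypothesis table : degree_table ap as_ bp bs.

Lemma degree_table_exchange (a1 a2 b1 b2 : nat) :
  a1 \in ap -> a2 \in ap -> b1 \in bp -> b2 \in bp ->
  a1 + b2 = a2 + b1 -> a1 = a2.
Proof.
move=> a1ap a2ap b1bp b2bp sum_eq; case: table => _ _ unique_rep.
have /unique_rep [p [_ p_unique]] : a1 + b2 \in sumset ap bp.
  by apply/sumsetP; exists a1 => //; exists b2.
have in_alpha a : a \in ap -> a \in ap ++ as_ by rewrite mem_cat => ->.
have in_beta b : b \in bp -> b \in bp ++ bs by rewrite mem_cat => ->.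
have p_eq1 := p_unique (a1, b2) (And3 (in_alpha _ a1ap) (in_beta _ b2bp) erefl).
have p_eq2 := p_unique (a2, b1) (And3 (in_alpha _ a2ap) (in_beta _ b1bp) sum_eq).
by case: (etrans (esym p_eq1) p_eq2).
Qed.

Lemma size_translate_cap_le1 (u v : nat) :
  size (undup [seq x <- sumset [:: u] bp | x \in sumset ap [:: v]]) <= 1.
Proof.
apply: size_undup_le1 => x y; rewrite !mem_filter.
move=> /andP[/sumsetP[a1 a1ap [v1 /[1!inE] /eqP-> ->]]
             /sumsetP[u1 /[1!inE] /eqP-> [b1 b1bp x_repr]]].
move=> /andP[/sumsetP[a2 a2ap [v2 /[1!inE] /eqP-> ->]]
             /sumsetP[u2 /[1!inE] /eqP-> [b2 b2bp y_repr]]].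
have exchanged_sums : a1 + b2 = a2 + b1 by lia.
by rewrite (degree_table_exchange a1ap a2ap b1bp b2bp exchanged_sums).
Qed.

End DegreeTable.

Theorem lemma10 (K L T : nat) (ap : K.-tuple nat) (as_ : T.-tuple nat)
    (bp : L.-tuple nat) (bs : T.-tuple nat) :
  degree_table ap as_ bp bs ->
  forall (i : 'I_(K + T)) (j : 'I_(L + T)),
    let alpha_i := tnth (cat_tuple ap as_) i in
    let beta_j := tnth (cat_tuple bp bs) j in
    size (undup [seq x <- sumset [:: alpha_i] bp | x \in sumset ap [:: beta_j]])
      <= 1.
Proof. by move=> table i j; apply: (size_translate_cap_le1 table). Qed.
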